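(* Let $\|\cdot\|$ be a norm on $\mathbb{R}^n$ and let $A,B>0$ and $1<q\le p$ be constants such that $$A\|e-\bar e\|^p\le 2-\|e+\bar e\|\quad\text{whenever } \|e\|=\|\bar e\|=1,$$ and $$\|x+y\|+\|x-y\|-2\|x\|\le \frac{B}{\|x\|^{q-1}}\|y\|^q\quad\text{for all } x\neq 0,\ y\in\mathbb{R}^n.$$ Let $R>0$. Then there is a constant $C=C(A,B,R,p,q)$ such that the following holds. Suppose $l_0,l_1,\bar l_0,\bar l_1\in\mathbb{R}^n$ satisfy $$\|l_1-\bar l_0\|\ge\|l_1-l_0\|,\qquad \|\bar l_1-l_0\|\ge\|\bar l_1-\bar l_0\|,\qquad \|l_1-l_0\|=\|\bar l_1-\bar l_0\|=1,$$ and $\|l_1-\bar l_1\|\le R$. Writing $l_t=(1-t)l_0+tl_1$, $\bar l_t=(1-t)\bar l_0+t\bar l_1$, we have $$\|l_1-\bar l_1\|\le \frac1t\, C\,\|l_t-\bar l_t\|^{q/p}\quad\text{for } 0<t\le 1,$$ and consequently $$\|l_1-\bar l_1\|\le \frac1t\, 2^{q/p}C\,\|l_t-\bar l_s\|^{q/p}\quad\text{for } 0<t\le s\le 1.$$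
   Context: The first displayed condition says $\|\cdot\|$ is ''$p$-uniformly convex'' and the second that it is ''$q$-uniformly smooth''. *)

From HB Require Import structures.
From mathcomp Require Import all_boot all_order all_algebra.
From mathcomp Require Import all_classical all_reals all_analysis.
Set Implicit Arguments. Unset Strict Implicit. Unset Printing Implicit Defensive.
Import Order.TTheory GRing.Theory Num.Theory.
Local Open Scope ring_scope.

Definition is_norm (R : realType) (n : nat) (N : 'rV[R]_n -> R) : Prop :=
  [/\ forall x y, N (x + y) <= N x + N y,
      forall (a : R) x, N (a *: x) = `|a| * N x
    & forall x, N x = 0 -> x = 0].

Definition p_uniformly_convex (R : realType) (n : nat) (N : 'rV[R]_n -> R)
    (A p : R) : Prop :=
  forall e e' : 'rV[R]_n, N e = 1 -> N e' = 1 ->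
    A * (N (e - e') `^ p) <= 2 - N (e + e').

Definition q_uniformly_smooth (R : realType) (n : nat) (N : 'rV[R]_n -> R)
    (B q : R) : Prop :=
  forall x y : 'rV[R]_n, x != 0 ->
    N (x + y) + N (x - y) - 2 * N x <= B / (N x `^ (q - 1)) * (N y `^ q).

Definition segpt (R : realType) (n : nat) (l0 l1 : 'rV[R]_n) (t : R) : 'rV[R]_n :=
  (1 - t) *: l0 + t *: l1.

From HB Require Import structures.
From mathcomp Require Import all_boot all_order all_algebra.
From mathcomp Require Import all_classical all_reals all_analysis.
From mathcomp Require Import ring lra.

Set Implicit Arguments.
Unset Strict Implicit.
Unset Printing Implicit Defensive.
Import Order.TTheory GRing.Theory Num.Theory.
Local Open Scope ring_scope.

(* Write u = l1 - l0, v = lb1 - lb0, w = l_t - lb_t and m = (u + v) / 2, so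
   that l1 - lb1 = w + (1 - t) (u - v). For tau = min (t, 1 - t), the vectors
   l1 - lb0 and lb1 - l0 are convex combinations of a unit vector and of
   m + w / (2 tau), resp. m - w / (2 tau) (with u and v exchanged when t > 1/2);
   as they have norm >= 1, so do m +- w / (2 tau). Either ||m|| < 1/2, and then
   ||w|| > tau, or uniform smoothness at m together with uniform convexity for
   u, v gives A ||u - v||^p <= 2^(q-1) B ||w / (2 tau)||^q. In both cases
   t (1 - t) ||u - v|| <= C ||w||^(q/p), which gives the first bound. The second
   follows from ||l_t - lb_t|| <= 2 ||l_t - lb_s||, since ||l_t - lb_s|| >= s - t
   by the hypothesis on lb1. *)

Section NormFacts.
Variables (R : realType) (n : nat) (N : 'rV[R]_n -> R).
Hypothesis normN : is_norm N.

Lemma nrm0 : N 0 = 0.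
Proof. by case: normN => _ hZ _; rewrite -(scale0r 0) hZ normr0 mul0r. Qed.

Lemma nrmN x : N (- x) = N x.
Proof. by case: normN => _ hZ _; rewrite -scaleN1r hZ normrN normr1 mul1r. Qed.

Lemma ler_nrmD x y : N (x + y) <= N x + N y.
Proof. by case: normN. Qed.

Lemma nrm_ge0 x : 0 <= N x.
Proof. by have := ler_nrmD x (- x); rewrite subrr nrm0 nrmN; lra. Qed.

Lemma nrm_distC x y : N (x - y) = N (y - x).
Proof. by rewrite -opprB nrmN. Qed.

Lemma nrmZ_ge0 a x : 0 <= a -> N (a *: x) = a * N x.
Proof. by case: normN => _ hZ _ a_ge0; rewrite hZ ger0_norm. Qed.

Lemma ler_nrm_comb a b x y :
  0 <= a -> 0 <= b -> N (a *: x + b *: y) <= a * N x + b * N y.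
Proof. by move=> a_ge0 b_ge0; rewrite -!nrmZ_ge0 //; exact: ler_nrmD. Qed.

Lemma nrm_unitB_le2 x y : N x = 1 -> N y = 1 -> N (x - y) <= 2.
Proof. by move=> Nx Ny; have := ler_nrmD x (- y); rewrite nrmN Nx Ny; lra. Qed.

Lemma ge1_nrm_comb_unit u z l :
  N u = 1 -> 0 < l <= 1 -> 1 <= N ((1 - l) *: u + l *: z) -> 1 <= N z.
Proof.
move=> Nu /andP[l_gt0 l_le1] h.
have l'_ge0 : 0 <= 1 - l by lra.
have := ler_nrm_comb u z l'_ge0 (ltW l_gt0); rewrite Nu => hc.
have : l * 1 <= l * N z by lra.
by rewrite ler_pM2l.
Qed.

End NormFacts.

Section RealPowers.
Variable R : realType.

Lemma ler_powR_root (p q x y c : R) : 0 < p -> 0 <= x -> 0 <= y -> 0 <= c ->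
  x `^ p <= c * y `^ q -> x <= c `^ p^-1 * y `^ (q / p).
Proof.
move=> p_gt0 x_ge0 y_ge0 c_ge0 h.
have -> : x = (x `^ p) `^ p^-1 by rewrite -powRrM mulfV ?gt_eqF ?powRr1.
have pV_ge0 : 0 <= p^-1 by rewrite invr_ge0 ltW.
apply: (le_trans (ge0_ler_powR pV_ge0 _ _ h)); rewrite ?nnegrE ?powR_ge0 //.
  by rewrite mulr_ge0 ?powR_ge0.
by rewrite powRM ?powR_ge0 // -powRrM.
Qed.

Lemma le1_ler_powR (x r : R) : 0 <= x -> x <= 1 -> r <= 1 -> x <= x `^ r.
Proof.
move=> x_ge0 x_le1 r_le1.
have [->|x_neq0] := eqVneq x 0; first exact: powR_ge0.
by apply: ger1_powR => //; rewrite x_le1 andbT lt_neqAle eq_sym x_neq0.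
Qed.

Lemma ler_mul_powR (x r M : R) :
  0 <= x <= M -> 1 <= M -> 0 <= r <= 1 -> x <= M * x `^ r.
Proof.
move=> /andP[x_ge0 x_leM] M_ge1 /andP[r_ge0 r_le1].
have [x_le1|x_gt1] := leP x 1.
  have := le1_ler_powR x_ge0 x_le1 r_le1.
  have := powR_ge0 x r; nra.
have : 1 <= x `^ r by rewrite -(powRr0 x) ler_powR // ltW.
nra.
Qed.

(* The factor [l^-1] inside the power is absorbed by [l <= l `^ (q / p)]. *)
Lemma ler_mul_powR_root (A c p q l d w : R) :
  0 < A -> 0 <= c -> 0 < p -> q <= p -> 0 < l <= 1 -> 0 <= d -> 0 <= w ->
  A * d `^ p <= c * (l^-1 * w) `^ q -> l * d <= (c / A) `^ p^-1 * w `^ (q / p).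
Proof.
move=> A_gt0 c_ge0 p_gt0 q_le_p /andP[l_gt0 l_le1] d_ge0 w_ge0 h.
have lVw_ge0 : 0 <= l^-1 * w by rewrite mulr_ge0 // invr_ge0 ltW.
have hd : d <= (c / A) `^ p^-1 * (l^-1 * w) `^ (q / p).
  apply: ler_powR_root => //; first by rewrite divr_ge0 // ltW.
  by rewrite mulrAC ler_pdivlMr // mulrC.
have r_le1 : q / p <= 1 by rewrite ler_pdivrMr // mul1r.
have hl : l <= l `^ (q / p) by apply: le1_ler_powR => //; exact: ltW.
have -> : w `^ (q / p) = l `^ (q / p) * (l^-1 * w) `^ (q / p).
  by rewrite -powRM ?mulrA ?mulfV ?mul1r ?gt_eqF // ltW.
have := powR_ge0 (c / A) p^-1; have := powR_ge0 (l^-1 * w) (q / p); nra.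
Qed.

End RealPowers.

Section Dichotomy.
Variables (R : realType) (n : nat) (N : 'rV[R]_n -> R) (A B p q : R).
Hypotheses (normN : is_norm N) (convexN : p_uniformly_convex N A p)
  (smoothN : q_uniformly_smooth N B q).

Lemma midpoint_convex_smooth u v y :
  0 <= B -> 1 <= q -> N u = 1 -> N v = 1 ->
  2^-1 <= N (2^-1 *: (u + v)) ->
  1 <= N (2^-1 *: (u + v) + y) -> 1 <= N (2^-1 *: (u + v) - y) ->
  A * N (u - v) `^ p <= B / 2^-1 `^ (q - 1) * N y `^ q.
Proof.
set m := 2^-1 *: (u + v) => B_ge0 q_ge1 Nu Nv Nm_ge Nmy Nmy'.
have m_neq0 : m != 0.
  by apply/eqP => m0; move: Nm_ge; rewrite m0 nrm0 //; lra.
have Nuv : N (u + v) = 2 * N m.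
  have -> : u + v = 2 *: m by rewrite /m scalerA mulfV ?scale1r.
  by rewrite nrmZ_ge0.
have hconv := convexN Nu Nv; rewrite Nuv in hconv.
have hsmooth := smoothN y m_neq0.
have half_pow_gt0 : 0 < (2^-1 : R) `^ (q - 1) by rewrite powR_gt0.
have hpow : (2^-1 : R) `^ (q - 1) <= N m `^ (q - 1).
  by apply: ge0_ler_powR; rewrite ?nnegrE ?subr_ge0 ?invr_ge0 ?nrm_ge0.
have hB : B / N m `^ (q - 1) <= B / 2^-1 `^ (q - 1).
  by rewrite ler_wpM2l // lef_pV2 // posrE (lt_le_trans half_pow_gt0).
have := powR_ge0 (N y) q; nra.
Qed.

Lemma unit_pair_dichotomy u v w t :
  0 <= B -> 1 <= q -> 0 < t -> 2 * t <= 1 -> N u = 1 -> N v = 1 ->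
  1 <= N ((1 - t) *: u + t *: v + w) -> 1 <= N ((1 - t) *: v + t *: u - w) ->
  t <= N w \/
  A * N (u - v) `^ p <= B / 2^-1 `^ (q - 1) * ((2 * t)^-1 * N w) `^ q.
Proof.
move=> B_ge0 q_ge1 t_gt0 t_le Nu Nv huw hvw.
set l := 2 * t; set m := 2^-1 *: (u + v); set y := l^-1 *: w.
have l_gt0 : 0 < l by rewrite mulr_gt0.
have hl : 0 < l <= 1 by rewrite l_gt0.
have Ny : N y = l^-1 * N w by rewrite nrmZ_ge0 // invr_ge0 ltW.
have e1 : (1 - t) *: u + t *: v + w = (1 - l) *: u + l *: (m + y).
  by apply/rowP => k; rewrite /m /y /l !mxE; field; rewrite gt_eqF.
have e2 : (1 - t) *: v + t *: u - w = (1 - l) *: v + l *: (m - y).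
  by apply/rowP => k; rewrite /m /y /l !mxE; field; rewrite gt_eqF.
rewrite e1 in huw; rewrite e2 in hvw.
have Nmy := ge1_nrm_comb_unit normN Nu hl huw.
have [Nm_ge|Nm_lt] := leP (2^-1) (N m).
  by right; rewrite -Ny; apply: midpoint_convex_smooth => //;
    exact: ge1_nrm_comb_unit hvw.
left; have := ler_nrmD normN m y; rewrite Ny => hmy.
have : 2^-1 * l <= N w.
  by rewrite -ler_pdivlMr // mulrC; lra.
rewrite /l; lra.
Qed.

End Dichotomy.

Definition convexity_constant (R : realType) (A B p q : R) : R :=
  (B / 2^-1 `^ (q - 1) / A) `^ p^-1.

Definition chord_constant (R : realType) (A B p q Rad : R) : R :=
  5 * (Rad + 2) + convexity_constant A B p q.

Section Chords.
Variables (R : realType) (n : nat) (N : 'rV[R]_n -> R) (A B p q Rad : R).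
Hypotheses (normN : is_norm N) (convexN : p_uniformly_convex N A p)
  (smoothN : q_uniformly_smooth N B q).
Hypotheses (A_gt0 : 0 < A) (B_gt0 : 0 < B) (q_gt1 : 1 < q) (q_le_p : q <= p).
Variables l0 l1 lb0 lb1 : 'rV[R]_n.
Hypotheses (far_l1 : N (l1 - l0) <= N (l1 - lb0))
  (far_lb1 : N (lb1 - lb0) <= N (lb1 - l0))
  (unit_l : N (l1 - l0) = 1) (unit_lb : N (lb1 - lb0) = 1)
  (end_le : N (l1 - lb1) <= Rad).

Local Notation gap t s := (segpt l0 l1 t - segpt lb0 lb1 s).
Local Notation dir_gap := ((l1 - l0) - (lb1 - lb0)).

Lemma end_le_gap t : t <= 1 -> N (l1 - lb1) <= N (gap t t) + (1 - t) * N dir_gap.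
Proof.
move=> t_le1; have t'_ge0 : 0 <= 1 - t by lra.
have -> : l1 - lb1 = gap t t + (1 - t) *: dir_gap.
  by apply/rowP => k; rewrite /segpt !mxE; ring.
by rewrite -nrmZ_ge0 //; apply: ler_nrmD.
Qed.

Lemma nrm_gap_le t : 0 <= t <= 1 -> N (gap t t) <= Rad + 2.
Proof.
move=> /andP[t_ge0 t_le1]; have t'_ge0 : 0 <= 1 - t by lra.
have -> : gap t t = (l1 - lb1) + (1 - t) *: - dir_gap.
  by apply/rowP => k; rewrite /segpt !mxE; ring.
have hd := nrm_unitB_le2 normN unit_l unit_lb.
have : (1 - t) * N dir_gap <= 2 by have := nrm_ge0 normN dir_gap; nra.
have := ler_nrmD normN (l1 - lb1) ((1 - t) *: - dir_gap).
rewrite nrmZ_ge0 // nrmN // => hD hdir; exact: le_trans hD (lerD end_le hdir).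
Qed.

Lemma chord_dichotomy t : 0 < t < 1 ->
  exists2 tau, 0 < tau /\ t * (1 - t) <= 2 * tau <= 1 &
    tau <= N (gap t t) \/
    A * N dir_gap `^ p <= B / 2^-1 `^ (q - 1) * ((2 * tau)^-1 * N (gap t t)) `^ q.
Proof.
move=> /andP[t_gt0 t_lt1].
have far_l1' : 1 <= N (l1 - lb0) by rewrite -unit_l.
have far_lb1' : 1 <= N (lb1 - l0) by rewrite -unit_lb.
have B_ge0 := ltW B_gt0; have q_ge1 := ltW q_gt1.
have [t_le|t_gt] := leP (2 * t) 1.
  exists t; first by split=> //; apply/andP; split; nra.
  apply: unit_pair_dichotomy => //.
    by have -> // : (1 - t) *: (l1 - l0) + t *: (lb1 - lb0) + gap t t = l1 - lb0;
      apply/rowP => k; rewrite /segpt !mxE; ring.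
  by have -> // : (1 - t) *: (lb1 - lb0) + t *: (l1 - l0) - gap t t = lb1 - l0;
    apply/rowP => k; rewrite /segpt !mxE; ring.
exists (1 - t); first by split; [lra | apply/andP; split; nra].
rewrite (nrm_distC normN (l1 - l0)); apply: unit_pair_dichotomy => //; try lra.
  by have -> // : (1 - (1 - t)) *: (lb1 - lb0) + (1 - t) *: (l1 - l0) + gap t t
    = l1 - lb0; apply/rowP => k; rewrite /segpt !mxE; ring.
by have -> // : (1 - (1 - t)) *: (l1 - l0) + (1 - t) *: (lb1 - lb0) - gap t t
  = lb1 - l0; apply/rowP => k; rewrite /segpt !mxE; ring.
Qed.

Let q_gt0 : 0 < q. Proof. exact: lt_trans ltr01 q_gt1. Qed.
Let p_gt0 : 0 < p. Proof. exact: lt_le_trans q_gt0 q_le_p. Qed.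
Let exponent_ge0 : 0 <= q / p. Proof. by rewrite divr_ge0 // ltW. Qed.
Let exponent_le1 : q / p <= 1. Proof. by rewrite ler_pdivrMr // mul1r. Qed.
Let Rad_ge0 : 0 <= Rad. Proof. exact: le_trans (nrm_ge0 normN _) end_le. Qed.

Lemma gap_le_powR t : 0 <= t <= 1 ->
  N (gap t t) <= (Rad + 2) * N (gap t t) `^ (q / p).
Proof.
move=> t01; apply: ler_mul_powR; rewrite ?exponent_ge0 ?nrm_ge0 ?nrm_gap_le //.
by have := Rad_ge0; lra.
Qed.

Lemma chord_defect_le t : 0 < t <= 1 ->
  t * ((1 - t) * N dir_gap) <=
  (4 * (Rad + 2) + convexity_constant A B p q) * N (gap t t) `^ (q / p).
Proof.
move=> /andP[t_gt0 t_le1]; set K := convexity_constant A B p q.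
have W_le := gap_le_powR (andb_true_intro (conj (ltW t_gt0) t_le1)).
set W := N (gap t t) in W_le *; set d := N dir_gap.
have W_ge0 : 0 <= W := nrm_ge0 normN _.
have d_ge0 : 0 <= d := nrm_ge0 normN _.
have d_le2 : d <= 2 := nrm_unitB_le2 normN unit_l unit_lb.
have Wr_ge0 : 0 <= W `^ (q / p) := powR_ge0 _ _.
have K_ge0 : 0 <= K := powR_ge0 _ _.
have MWr_ge0 : 0 <= (Rad + 2) * W `^ (q / p).
  by rewrite mulr_ge0 // addr_ge0.
have [->|t_neq1] := eqVneq t 1.
  by rewrite subrr mul0r mulr0 mulr_ge0 // addr_ge0 // mulr_ge0 // addr_ge0.
have t_lt1 : t < 1 by rewrite lt_neqAle t_neq1.
have [tau [tau_gt0 /andP[ht_tau tau_le]] [W_big|convex_bound]] :=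
  chord_dichotomy (andb_true_intro (conj t_gt0 t_lt1)).
  have : t * ((1 - t) * d) <= 2 * (2 * tau) by nra.
  have := mulr_ge0 K_ge0 Wr_ge0; rewrite -/W in W_big; lra.
have hK : 0 <= B / 2^-1 `^ (q - 1) by rewrite divr_ge0 ?powR_ge0 // ltW.
have tau_range : 0 < 2 * tau <= 1 by rewrite mulr_gt0 ?tau_le.
have := ler_mul_powR_root A_gt0 hK p_gt0 q_le_p tau_range d_ge0 W_ge0 convex_bound.
have : t * ((1 - t) * d) <= 2 * tau * d by nra.
change ((B / 2^-1 `^ (q - 1) / A) `^ p^-1) with K; lra.
Qed.

Lemma chord_endpoint_le t : 0 < t <= 1 ->
  N (l1 - lb1) <= t^-1 * chord_constant A B p q Rad * N (gap t t) `^ (q / p).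
Proof.
move=> t01; have /andP[t_gt0 t_le1] := t01.
have hend := end_le_gap t_le1.
have hdefect := chord_defect_le t01.
have W_le := gap_le_powR (andb_true_intro (conj (ltW t_gt0) t_le1)).
have W_ge0 := nrm_ge0 normN (gap t t).
rewrite -mulrA ler_pdivlMl // /chord_constant; nra.
Qed.

Lemma gap_shift_le t s : 0 < t -> t <= s -> s <= 1 ->
  N (gap t t) <= 2 * N (gap t s).
Proof.
move=> t_gt0 t_le_s s_le1.
have st_ge0 : 0 <= s - t by rewrite subr_ge0.
have s'_ge0 : 0 <= 1 - s by rewrite subr_ge0.
have h_tt : N (gap t t) <= N (gap t s) + (s - t).
  have -> : gap t t = gap t s + (s - t) *: (lb1 - lb0).
    by apply/rowP => k; rewrite /segpt !mxE; ring.
  by apply: (le_trans (ler_nrmD normN _ _)); rewrite nrmZ_ge0 // unit_lb mulr1.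
have h_ts : s - t <= N (gap t s).
  have e_lb1 : lb1 - l0 = (1 - s) *: (lb1 - lb0) - gap t s + t *: (l1 - l0).
    by apply/rowP => k; rewrite /segpt !mxE; ring.
  have := far_lb1; rewrite e_lb1 unit_lb.
  have := ler_nrmD normN ((1 - s) *: (lb1 - lb0) - gap t s) (t *: (l1 - l0)).
  have := ler_nrmD normN ((1 - s) *: (lb1 - lb0)) (- gap t s).
  rewrite nrmN // (nrmZ_ge0 normN _ s'_ge0) (nrmZ_ge0 normN _ (ltW t_gt0)).
  by rewrite unit_l unit_lb; lra.
lra.
Qed.

Lemma chord_endpoint_shift_le t s : 0 < t -> t <= s -> s <= 1 ->
  N (l1 - lb1) <=
  t^-1 * 2 `^ (q / p) * chord_constant A B p q Rad * N (gap t s) `^ (q / p).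
Proof.
move=> t_gt0 t_le_s s_le1.
have t01 : 0 < t <= 1 by rewrite t_gt0 (le_trans t_le_s s_le1).
apply: (le_trans (chord_endpoint_le t01)).
set C := chord_constant A B p q Rad; set X := N (gap t s).
have C_ge0 : 0 <= C by rewrite addr_ge0 ?powR_ge0 // mulr_ge0 // addr_ge0.
rewrite (_ : t^-1 * 2 `^ (q / p) * C * X `^ (q / p) =
             t^-1 * C * (2 `^ (q / p) * X `^ (q / p))); last by ring.
apply: (@ler_wpM2l _ (t^-1 * C)); first by rewrite mulr_ge0 // invr_ge0 ltW.
rewrite -powRM ?nrm_ge0 //.
apply: ge0_ler_powR => //; rewrite ?nnegrE ?mulr_ge0 ?nrm_ge0 //.
exact: gap_shift_le.
Qed.

End Chords.

Theorem proposition3p7 (R : realType) (A B p q Rad : R) :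
  0 < A -> 0 < B -> 1 < q -> q <= p -> 0 < Rad ->
  exists C : R,
    forall (n : nat) (N : 'rV[R]_n -> R),
      is_norm N -> p_uniformly_convex N A p -> q_uniformly_smooth N B q ->
      forall l0 l1 lb0 lb1 : 'rV[R]_n,
        N (l1 - lb0) >= N (l1 - l0) ->
        N (lb1 - l0) >= N (lb1 - lb0) ->
        N (l1 - l0) = 1 -> N (lb1 - lb0) = 1 ->
        N (l1 - lb1) <= Rad ->
        (forall t : R, 0 < t <= 1 ->
           N (l1 - lb1) <= t^-1 * C * (N (segpt l0 l1 t - segpt lb0 lb1 t) `^ (q / p)))
        /\
        (forall t s : R, 0 < t -> t <= s -> s <= 1 ->
           N (l1 - lb1) <= t^-1 * (2 `^ (q / p)) * C *
                            (N (segpt l0 l1 t - segpt lb0 lb1 s) `^ (q / p))).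
Proof.
move=> A_gt0 B_gt0 q_gt1 q_le_p _; exists (chord_constant A B p q Rad).
move=> n N normN convexN smoothN l0 l1 lb0 lb1 far_l1 far_lb1 unit_l unit_lb end_le.
by split=> [t t01 | t s t_gt0 t_le_s s_le1];
  [apply: chord_endpoint_le | apply: chord_endpoint_shift_le].
Qed.
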